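(* Let $C\in\mathbb{R}^{N\times N}$ be a symmetric positive definite matrix, and let $\{1,\dots,N\}=\mathcal S\cup\mathcal S'$ be a partition into disjoint nonempty sets, with block decomposition $C=\begin{bmatrix} C_{\mathcal S} & C_{\mathcal S\mathcal S'}\\ C_{\mathcal S'\mathcal S} & C_{\mathcal S'}\end{bmatrix}$, where $C_{\mathcal S},C_{\mathcal S'}\succ 0$. For $\lambda>0$ define \[ R_{\mathcal S}(\lambda):=(C_{\mathcal S}+\lambda I)^{-1}-\big[(C+\lambda I)^{-1}\big]_{\mathcal S}, \] where $[M]_{\mathcal S}$ denotes the principal submatrix of $M$ indexed by $\mathcal S$. Define \[ \theta:=\frac{\|C_{\mathcal S\mathcal S'}\|^2}{\lambda_{\min}(C_{\mathcal S})\,\lambda_{\min}(C_{\mathcal S'})}. \] If $\theta<1$, then for all $\lambda>0$, \[ \|R_{\mathcal S}(\lambda)\|\le \frac{\|C_{\mathcal S\mathcal S'}\|^2}{(1-\theta)\,(\lambda_{\min}(C)+\lambda)^3}. \]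
   Context: $\|\cdot\|$ denotes the spectral (operator $2$-) norm and $\lambda_{\min}(\cdot)$ the smallest eigenvalue of a symmetric matrix. $C_{\mathcal S}$, $C_{\mathcal S'}$ are the principal submatrices of $C$ on $\mathcal S$ and $\mathcal S'$, and $C_{\mathcal S\mathcal S'}$ is the submatrix with rows in $\mathcal S$ and columns in $\mathcal S'$. *)

From HB Require Import structures.
From mathcomp Require Import all_boot all_order all_algebra.
From mathcomp Require Import classical_sets reals.
Set Implicit Arguments. Unset Strict Implicit. Unset Printing Implicit Defensive.
Import Order.TTheory GRing.Theory Num.Theory.
Local Open Scope ring_scope.
Local Open Scope classical_set_scope.

Definition vnorm (R : realType) (n : nat) (x : 'cV[R]_n) : R :=
  Num.sqrt (\sum_(i < n) x i 0 ^+ 2).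

Definition opnorm (R : realType) (m n : nat) (A : 'M[R]_(m, n)) : R :=
  sup [set vnorm (A *m x) | x in [set x : 'cV[R]_n | vnorm x <= 1]].

Definition lambda_min (R : realType) (n : nat) (A : 'M[R]_n) : R :=
  inf [set a : R | eigenvalue A a].

(* submatrix with rows in S and columns in T (in the enumeration order of 'I_n) *)
Definition blk (R : realType) (n : nat) (S T : {set 'I_n}) (M : 'M[R]_n)
  : 'M[R]_(#|S|, #|T|) :=
  \matrix_(i < #|S|, j < #|T|) M (enum_val i) (enum_val j).

(* Put M = C + lam I and split it along S and ~: S into the blocks A = M_S,
   B = M_{S S'} = C_{S S'} and D = M_{S'}.  Solving M W = I blockwise gives
     A^-1 - [M^-1]_S = - A^-1 B D^-1 B^T [M^-1]_S,
   and A^-1, D^-1 and [M^-1]_S all have norm at most 1 / (lambda_min C + lam),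
   because the quadratic forms of M and of its compressions dominate
   (lambda_min C + lam) |x|^2.  This yields the bound ||C_{S S'}||^2 /
   (lambda_min C + lam)^3, which is stronger than the claim since 0 <= theta < 1.
   The only spectral fact used, lambda_min C |x|^2 <= x^T C x, follows from the
   infimum of the Rayleigh quotient of a symmetric matrix being an eigenvalue. *)

From HB Require Import structures.
From mathcomp Require Import all_boot all_order all_algebra.
From mathcomp Require Import classical_sets reals.
From mathcomp Require Import ring lra.
Set Implicit Arguments. Unset Strict Implicit. Unset Printing Implicit Defensive.
Import Order.TTheory GRing.Theory Num.Theory.
Local Open Scope ring_scope.

Section EuclideanNorm.
Variable R : realType.

Definition vdot n (u v : 'cV[R]_n) : R := (u^T *m v) 0 0.

Lemma vdotE n (u v : 'cV[R]_n) : vdot u v = \sum_i u i 0 * v i 0.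
Proof. by rewrite /vdot mxE; apply: eq_bigr => i _; rewrite mxE. Qed.

Lemma vdotC n (u v : 'cV[R]_n) : vdot u v = vdot v u.
Proof. by rewrite !vdotE; apply: eq_bigr => i _; rewrite mulrC. Qed.

Lemma vdotDr n (u v w : 'cV[R]_n) : vdot u (v + w) = vdot u v + vdot u w.
Proof. by rewrite /vdot mulmxDr mxE. Qed.

Lemma vdotZr n a (u v : 'cV[R]_n) : vdot u (a *: v) = a * vdot u v.
Proof. by rewrite /vdot -scalemxAr mxE. Qed.

Lemma vdotDl n (u v w : 'cV[R]_n) : vdot (v + w) u = vdot v u + vdot w u.
Proof. by rewrite vdotC vdotDr !(vdotC u). Qed.

Lemma vdotZl n a (u v : 'cV[R]_n) : vdot (a *: v) u = a * vdot v u.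
Proof. by rewrite vdotC vdotZr vdotC. Qed.

Lemma vdot_mulmx m n (A : 'M[R]_(m, n)) u v :
  vdot u (A *m v) = vdot (A^T *m u) v.
Proof. by rewrite /vdot trmx_mul trmxK mulmxA. Qed.

Lemma vnorm_sqr n (u : 'cV[R]_n) : vnorm u ^+ 2 = vdot u u.
Proof.
rewrite sqr_sqrtr ?vdotE; first by apply: eq_bigr => i _; rewrite expr2.
by apply: sumr_ge0 => i _; apply: sqr_ge0.
Qed.

Lemma vnorm_ge0 n (u : 'cV[R]_n) : 0 <= vnorm u.
Proof. exact: sqrtr_ge0. Qed.

Lemma vnorm_eq0 n (u : 'cV[R]_n) : (vnorm u == 0) = (u == 0).
Proof.
rewrite -sqrf_eq0 vnorm_sqr vdotE; apply/idP/eqP => [|->]; last first.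
  by rewrite big1 // => i _; rewrite mxE mul0r.
have sq_ge0 (k : 'I_n) : true -> 0 <= u k 0 * u k 0 by rewrite -expr2 sqr_ge0.
move/eqP/(psumr_eq0P sq_ge0) => u0; apply/matrixP => i j; rewrite (ord1 j) mxE.
by apply/eqP; move: (u0 i isT) => /eqP; rewrite mulf_eq0 orbb.
Qed.

Lemma vnorm_gt0 n (u : 'cV[R]_n) : (0 < vnorm u) = (u != 0).
Proof. by rewrite lt_def vnorm_eq0 vnorm_ge0 andbT. Qed.

Lemma vnormZ n a (u : 'cV[R]_n) : vnorm (a *: u) = `|a| * vnorm u.
Proof.
apply: (@pexpIrn _ 2) => //; rewrite ?nnegrE ?mulr_ge0 ?vnorm_ge0 //.
by rewrite exprMn real_normK ?num_real // !vnorm_sqr vdotZl vdotZr mulrA.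
Qed.

Lemma vnormN n (u : 'cV[R]_n) : vnorm (- u) = vnorm u.
Proof. by rewrite -scaleN1r vnormZ normrN1 mul1r. Qed.

Lemma vnorm0 n : vnorm (0 : 'cV[R]_n) = 0.
Proof. by apply/eqP; rewrite vnorm_eq0. Qed.

Lemma vnorm_normalize n (u : 'cV[R]_n) : u != 0 -> vnorm ((vnorm u)^-1 *: u) = 1.
Proof.
rewrite -vnorm_gt0 => u_gt0.
by rewrite vnormZ ger0_norm ?invr_ge0 ?vnorm_ge0 // mulVf ?gt_eqF.
Qed.

Lemma vnorm_isometry m n (E : 'M[R]_(m, n)) u :
  E^T *m E = 1%:M -> vnorm (E *m u) = vnorm u.
Proof.
move=> EE; apply: (@pexpIrn _ 2) => //; rewrite ?nnegrE ?vnorm_ge0 //.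
by rewrite !vnorm_sqr vdot_mulmx mulmxA EE mul1mx.
Qed.

Lemma discriminant_le0 (a b c : R) : 0 <= c ->
  (forall t, 0 <= a + 2 * t * b + t ^+ 2 * c) -> b ^+ 2 <= a * c.
Proof.
move=> c_ge0 nonneg.
have a_ge0 : 0 <= a by move: (nonneg 0); rewrite !(mul0r, mulr0, expr0n, addr0).
have [c0|c_neq0] := eqVneq c 0.
  rewrite c0 mulr0; have [->|b_neq0] := eqVneq b 0; first by rewrite expr0n.
  move: (nonneg (- (a + 1) / (2 * b))).
  have -> : 2 * (- (a + 1) / (2 * b)) * b = - (a + 1).
    by field; rewrite b_neq0.
  by rewrite c0 mulr0 addr0; lra.
have c_gt0 : 0 < c by rewrite lt_def c_neq0.
move: (nonneg (- (b / c))).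
have -> : a + 2 * - (b / c) * b + (- (b / c)) ^+ 2 * c = (a * c - b ^+ 2) / c.
  by field.
by rewrite pmulr_lge0 ?invr_gt0 // subr_ge0.
Qed.

Lemma psdmx_cauchy_schwarz n (K : 'M[R]_n) (x y : 'cV[R]_n) :
  K^T = K -> (forall z, 0 <= vdot z (K *m z)) ->
  vdot y (K *m x) ^+ 2 <= vdot x (K *m x) * vdot y (K *m y).
Proof.
move=> sK psd; apply: discriminant_le0 => [|t]; first exact: psd.
have Kxy : vdot x (K *m y) = vdot y (K *m x) by rewrite vdot_mulmx sK vdotC.
apply: le_trans (psd (x + t *: y)) _.
rewrite mulmxDr -scalemxAr !(vdotDl, vdotDr, vdotZl, vdotZr) Kxy.
lra.
Qed.

Lemma cauchy_schwarz n (x y : 'cV[R]_n) : `|vdot x y| <= vnorm x * vnorm y.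
Proof.
rewrite -(@ler_pXn2r _ 2) ?nnegrE ?mulr_ge0 ?vnorm_ge0 // real_normK ?num_real //.
rewrite exprMn !vnorm_sqr [X in _ <= X]mulrC.
have := @psdmx_cauchy_schwarz n 1%:M y x (trmx1 _ _).
by rewrite !mul1mx; apply=> z; rewrite mul1mx -vnorm_sqr sqr_ge0.
Qed.

End EuclideanNorm.

Section OperatorNorm.
Variable R : realType.

Lemma opnorm_has_ubound m n (A : 'M[R]_(m, n)) :
  has_ubound [set vnorm (A *m x) | x in [set x : 'cV[R]_n | vnorm x <= 1]].
Proof.
exists (Num.sqrt (\sum_i vnorm (row i A)^T ^+ 2)) => _ [x /= x_le1 <-].
rewrite /vnorm ler_sqrt ?sumr_ge0 // => [|i _]; last exact: sqr_ge0.
apply: ler_sum => i _.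
have -> : (A *m x) i 0 = vdot (row i A)^T x.
  by rewrite vdotE mxE; apply: eq_bigr => j _; rewrite !mxE.
rewrite -real_normK ?num_real // ler_pXn2r ?nnegrE ?vnorm_ge0 //.
exact: le_trans (cauchy_schwarz _ _) (ler_piMr (vnorm_ge0 _) x_le1).
Qed.

Lemma opnorm_ge0 m n (A : 'M[R]_(m, n)) : 0 <= opnorm A.
Proof.
apply: ub_le_sup (opnorm_has_ubound A) _ _; exists 0; rewrite /= ?vnorm0 //.
by rewrite mulmx0 vnorm0.
Qed.

Lemma vnorm_mulmx_le m n (A : 'M[R]_(m, n)) x :
  vnorm (A *m x) <= opnorm A * vnorm x.
Proof.
have [->|x_neq0] := eqVneq x 0; first by rewrite mulmx0 !vnorm0 mulr0.
have x_gt0 : 0 < vnorm x by rewrite vnorm_gt0.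
have : vnorm (A *m ((vnorm x)^-1 *: x)) <= opnorm A.
  apply: ub_le_sup (opnorm_has_ubound A) _ _.
  by exists ((vnorm x)^-1 *: x); rewrite //= vnorm_normalize.
by rewrite -scalemxAr vnormZ ger0_norm ?invr_ge0 ?vnorm_ge0 // ler_pdivrMl // mulrC.
Qed.

Lemma opnorm_le m n (A : 'M[R]_(m, n)) c : 0 <= c ->
  (forall x, vnorm (A *m x) <= c * vnorm x) -> opnorm A <= c.
Proof.
move=> c_ge0 Ac; apply: ge_sup => [|_ [x /= x_le1 <-]].
  by exists (vnorm (A *m 0)), 0; rewrite //= vnorm0.
exact: le_trans (Ac x) (ler_piMr c_ge0 x_le1).
Qed.

Lemma opnormN m n (A : 'M[R]_(m, n)) : opnorm (- A) = opnorm A.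
Proof.
apply/le_anti/andP; split; apply: opnorm_le (opnorm_ge0 _) _ => x.
  by rewrite mulNmx vnormN vnorm_mulmx_le.
by rewrite -{1}(opprK A) mulNmx vnormN vnorm_mulmx_le.
Qed.

Lemma opnorm_mulmx m n p (A : 'M[R]_(m, n)) (B : 'M[R]_(n, p)) :
  opnorm (A *m B) <= opnorm A * opnorm B.
Proof.
apply: opnorm_le (mulr_ge0 (opnorm_ge0 _) (opnorm_ge0 _)) _ => x.
rewrite -mulmxA -mulrA; apply: le_trans (vnorm_mulmx_le _ _) _.
by rewrite ler_wpM2l ?opnorm_ge0 ?vnorm_mulmx_le.
Qed.

Lemma opnorm_mulmx_le m n p (A : 'M[R]_(m, n)) (B : 'M[R]_(n, p)) a b :
  opnorm A <= a -> opnorm B <= b -> opnorm (A *m B) <= a * b.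
Proof.
move=> Aa Bb; apply: le_trans (opnorm_mulmx A B) (ler_pM _ _ Aa Bb);
  exact: opnorm_ge0.
Qed.

Lemma opnorm_trmx m n (A : 'M[R]_(m, n)) : opnorm A^T <= opnorm A.
Proof.
apply: opnorm_le (opnorm_ge0 A) _ => y; set z := A^T *m y.
have [z0|z_neq0] := eqVneq z 0.
  by rewrite z0 vnorm0 mulr_ge0 ?opnorm_ge0 ?vnorm_ge0.
have : vnorm z ^+ 2 <= opnorm A * vnorm z * vnorm y.
  rewrite vnorm_sqr {2}/z vdot_mulmx trmxK.
  apply: le_trans (ler_norm _) (le_trans (cauchy_schwarz _ _) _).
  by rewrite ler_wpM2r ?vnorm_ge0 ?vnorm_mulmx_le.
by rewrite expr2 -mulrA mulrCA ler_pM2l ?vnorm_gt0.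
Qed.

Lemma opnorm_isometry m n (E : 'M[R]_(m, n)) : E^T *m E = 1%:M -> opnorm E <= 1.
Proof. by move=> EE; apply: opnorm_le ler01 _ => x; rewrite vnorm_isometry ?mul1r. Qed.

End OperatorNorm.

Section Coercivity.
Variable R : realType.

Definition coercive n (K : 'M[R]_n) (k : R) :=
  forall x, k * vnorm x ^+ 2 <= vdot x (K *m x).

Lemma coercive_vnorm n (K : 'M[R]_n) k x :
  coercive K k -> k * vnorm x <= vnorm (K *m x).
Proof.
move=> Kk; have [->|x_neq0] := eqVneq x 0; first by rewrite mulmx0 vnorm0 mulr0.
have x_gt0 : 0 < vnorm x by rewrite vnorm_gt0.
rewrite -(ler_pM2l x_gt0) mulrCA -expr2.
exact: le_trans (Kk x) (le_trans (ler_norm _) (cauchy_schwarz _ _)).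
Qed.

Lemma coercive_unitmx n (K : 'M[R]_n) k : 0 < k -> coercive K k -> K \in unitmx.
Proof.
move=> k_gt0 Kk; rewrite unitmxE unitfE -det_tr.
apply/negP => /det0P [v v_neq0 /(congr1 trmx)]; rewrite trmx_mul trmxK trmx0 => Kv0.
have := coercive_vnorm v^T Kk.
by rewrite Kv0 vnorm0 pmulr_rle0 // leNgt vnorm_gt0 trmx_eq0 v_neq0.
Qed.

Lemma opnorm_invmx_coercive n (K : 'M[R]_n) k :
  0 < k -> coercive K k -> opnorm (invmx K) <= k^-1.
Proof.
move=> k_gt0 Kk; apply: opnorm_le => [|y]; first by rewrite invr_ge0 ltW.
rewrite mulrC ler_pdivlMr // mulrC.
by have := coercive_vnorm (invmx K *m y) Kk; rewrite mulKVmx ?(coercive_unitmx k_gt0).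
Qed.

Lemma coercive_compress m n (K : 'M[R]_n) (E : 'M[R]_(n, m)) k :
  E^T *m E = 1%:M -> coercive K k -> coercive (E^T *m K *m E) k.
Proof.
move=> EE Kk x; rewrite -(vnorm_isometry x EE) -!mulmxA vdot_mulmx trmxK.
exact: Kk.
Qed.

Lemma coercive_add_scalar n (K : 'M[R]_n) k l :
  coercive K k -> coercive (K + l%:M) (k + l).
Proof.
move=> Kk x; rewrite mulmxDl mul_scalar_mx vdotDr vdotZr -vnorm_sqr mulrDl.
by rewrite lerD2r.
Qed.

Lemma vdot_eigenvector n (K : 'M[R]_n) a (v : 'rV[R]_n) :
  v *m K = a *: v -> vdot v^T (K *m v^T) = a * vnorm v^T ^+ 2.
Proof. by move=> vK; rewrite vnorm_sqr /vdot trmxK mulmxA vK -scalemxAl mxE. Qed.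

Lemma eigenvalue_ge_coercive n (K : 'M[R]_n) k a :
  coercive K k -> eigenvalue K a -> k <= a.
Proof.
move=> Kk /eigenvalueP [v /vdot_eigenvector vK v_neq0].
have v_gt0 : 0 < vnorm v^T ^+ 2 by rewrite exprn_gt0 // vnorm_gt0 trmx_eq0.
by rewrite -(ler_pM2r v_gt0) -vK.
Qed.

Lemma posdef_eigenvalue_gt0 n (K : 'M[R]_n) a :
  (forall x : 'cV[R]_n, x != 0 -> 0 < (x^T *m K *m x) 0 0) ->
  eigenvalue K a -> 0 < a.
Proof.
move=> posK /eigenvalueP [v /vdot_eigenvector vK v_neq0].
have v_gt0 : 0 < vnorm v^T ^+ 2 by rewrite exprn_gt0 // vnorm_gt0 trmx_eq0.
by rewrite -(pmulr_lgt0 _ v_gt0) -vK /vdot mulmxA posK ?trmx_eq0.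
Qed.

Lemma lambda_min_ge0 n (K : 'M[R]_n) :
  (forall a, eigenvalue K a -> 0 <= a) -> 0 <= lambda_min K.
Proof.
move=> eig_ge0; rewrite /lambda_min.
have [->|/set0P eigK] := eqVneq [set a : R | eigenvalue K a]%classic set0.
  by rewrite inf0.
exact: lb_le_inf eigK eig_ge0.
Qed.

Lemma lambda_min_posdef_ge0 n (K : 'M[R]_n) :
  (forall x : 'cV[R]_n, x != 0 -> 0 < (x^T *m K *m x) 0 0) -> 0 <= lambda_min K.
Proof. by move=> posK; apply: lambda_min_ge0 => a /(posdef_eigenvalue_gt0 posK) /ltW. Qed.

End Coercivity.

Section RayleighQuotient.
Variable R : realType.

Definition rayleigh_inf n (M : 'M[R]_n) : R :=
  inf [set vdot x (M *m x) | x in [set x | vnorm x = 1]]%classic.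

Lemma rayleigh_inf_coercive n (M : 'M[R]_n) : coercive M (rayleigh_inf M).
Proof.
move=> x; have [->|x_neq0] := eqVneq x 0.
  by rewrite vnorm0 expr0n mulr0 mulmx0 -vnorm_sqr vnorm0 expr0n.
have lbM : has_lbound [set vdot x (M *m x) | x in [set x | vnorm x = 1]]%classic.
  exists (- opnorm M) => _ [y /= y1 <-]; apply: lerNnormlW.
  apply: le_trans (cauchy_schwarz _ _) _.
  by rewrite y1 mul1r -[leRHS]mulr1 -y1 vnorm_mulmx_le.
have x_gt0 : 0 < vnorm x ^+ 2 by rewrite exprn_gt0 // vnorm_gt0.
have := ge_inf lbM (ex_intro2 _ _ _ (vnorm_normalize x_neq0) erefl).
rewrite -scalemxAr vdotZl vdotZr mulrA -expr2 exprVn mulrC ler_pdivlMr //.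
Qed.

Lemma psdmx_vnorm_sqr_le n (K : 'M[R]_n) x :
  K^T = K -> (forall z, 0 <= vdot z (K *m z)) ->
  vnorm (K *m x) ^+ 2 <= opnorm K * vdot x (K *m x).
Proof.
move=> sK psdK; set y := K *m x.
have cs := psdmx_cauchy_schwarz x y sK psdK; rewrite -/y -vnorm_sqr in cs.
have Ky : vdot y (K *m y) <= opnorm K * vnorm y ^+ 2.
  apply: le_trans (ler_norm _) (le_trans (cauchy_schwarz _ _) _).
  by rewrite mulrC expr2 mulrA ler_wpM2r ?vnorm_ge0 ?vnorm_mulmx_le.
have kq_ge0 : 0 <= opnorm K * vdot x (K *m x) by rewrite mulr_ge0 ?opnorm_ge0.
have := le_trans cs (ler_wpM2l (psdK x) Ky); have := sqr_ge0 (vnorm y).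
set Y := vnorm y ^+ 2; nra.
Qed.

(* If m = rayleigh_inf M were not an eigenvalue, K = M - m I would be
   invertible and positive semidefinite, and the bounds |x| <= |K^-1| |K x| and
   |K x|^2 <= |K| x^T K x would keep x^T K x away from 0 on the unit sphere,
   so m would not be the infimum. *)
Lemma eigenvalue_rayleigh_inf n (M : 'M[R]_n) :
  (0 < n)%N -> M^T = M -> eigenvalue M (rayleigh_inf M).
Proof.
move=> n_gt0 sM; set m := rayleigh_inf M; apply: contraT => not_eig.
set K := M - m%:M.
have qK x : vdot x (K *m x) = vdot x (M *m x) - m * vnorm x ^+ 2.
  by rewrite mulmxBl mul_scalar_mx -scaleN1r vdotDr !vdotZr mulN1r -vnorm_sqr.
have psdK z : 0 <= vdot z (K *m z) by rewrite qK subr_ge0 rayleigh_inf_coercive.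
have sK : K^T = K by rewrite linearB /= sM tr_scalar_mx.
have K_unit : K \in unitmx.
  rewrite unitmxE unitfE; apply: contra not_eig => /det0P [v v_neq0 /eqP vK].
  apply/eigenvalueP; exists v => //.
  by move: vK; rewrite mulmxBr mul_mx_scalar subr_eq0 => /eqP.
set c := opnorm (invmx K) ^+ 2 * opnorm K.
have unit_bound x : vnorm x = 1 -> 1 <= c * vdot x (K *m x).
  move=> x1; have := vnorm_mulmx_le (invmx K) (K *m x); rewrite mulKmx // x1 => h1.
  have h2 := psdmx_vnorm_sqr_le x sK psdK.
  have := opnorm_ge0 (invmx K); have := vnorm_ge0 (K *m x); rewrite /c; nra.
have [u u1] : exists u : 'cV[R]_n, vnorm u = 1.
  pose e : 'cV[R]_n := delta_mx (Ordinal n_gt0) 0.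
  have e_neq0 : e != 0.
    by apply/eqP => /matrixP/(_ (Ordinal n_gt0) 0)/eqP; rewrite !mxE !eqxx oner_eq0.
  by exists ((vnorm e)^-1 *: e); exact: vnorm_normalize.
have c_gt0 : 0 < c.
  have := unit_bound u u1; have := psdK u.
  have : 0 <= c by rewrite mulr_ge0 ?sqr_ge0 ?opnorm_ge0.
  nra.
have : m + c^-1 <= m.
  apply: lb_le_inf => [|_ [x /= x1 <-]]; first by exists (vdot u (M *m u)), u.
  by have := unit_bound x x1; rewrite qK x1 expr1n mulr1 -ler_pdivrMl // mulr1 lerBrDl.
have : 0 < c^-1 by rewrite invr_gt0.
lra.
Qed.

Lemma lambda_min_rayleigh_inf n (M : 'M[R]_n) :
  (0 < n)%N -> M^T = M -> lambda_min M = rayleigh_inf M.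
Proof.
move=> n_gt0 sM; have eig_m := eigenvalue_rayleigh_inf n_gt0 sM.
have m_lb : lbound [set a | eigenvalue M a]%classic (rayleigh_inf M).
  by move=> a; apply: eigenvalue_ge_coercive (rayleigh_inf_coercive M).
rewrite /lambda_min; apply/le_anti/andP; split.
  exact: ge_inf (ex_intro _ _ m_lb) _ eig_m.
by apply: lb_le_inf m_lb; exists (rayleigh_inf M).
Qed.

Lemma lambda_min_coercive n (M : 'M[R]_n) : M^T = M -> coercive M (lambda_min M).
Proof.
case: n M => [|n] M sM.
  by move=> x; rewrite (flatmx0 x) vnorm0 mulmx0 -vnorm_sqr vnorm0 expr0n mulr0.
by rewrite lambda_min_rayleigh_inf //; apply: rayleigh_inf_coercive.
Qed.

End RayleighQuotient.

Section SelectionMatrix.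
Variables (R : realType) (N : nat).

Definition selmx (S : {set 'I_N}) : 'M[R]_(N, #|S|) := colsub enum_val 1%:M.

Lemma trmx_selmx (S : {set 'I_N}) : (selmx S)^T = rowsub enum_val 1%:M.
Proof. by rewrite trmx_mxsub trmx1. Qed.

Lemma blk_selmx (S T : {set 'I_N}) (M : 'M[R]_N) :
  blk S T M = (selmx S)^T *m M *m selmx T.
Proof.
rewrite trmx_selmx mul_rowsub_mx mul1mx -mxsub_mul mulmx1.
by apply/matrixP => i j; rewrite !mxE.
Qed.

Lemma selmx_isometry (S : {set 'I_N}) : (selmx S)^T *m selmx S = 1%:M.
Proof.
rewrite trmx_selmx -mxsub_mul mulmx1; apply/matrixP => i j.
by rewrite !mxE (inj_eq enum_val_inj).
Qed.

Lemma selmxC_orth (S : {set 'I_N}) : (selmx (~: S))^T *m selmx S = 0.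
Proof.
rewrite trmx_selmx -mxsub_mul mulmx1; apply/matrixP => i j; rewrite !mxE.
have := enum_valP i; rewrite finset.in_setC; case: eqP => // ->.
by rewrite enum_valP.
Qed.

Lemma selmx_partition (S : {set 'I_N}) :
  selmx S *m (selmx S)^T + selmx (~: S) *m (selmx (~: S))^T = 1%:M.
Proof.
have sel_sum A k l :
    (selmx A *m (selmx A)^T) k l = \sum_(i in A) 1%:M k i * 1%:M i l :> R.
  by rewrite mxE [RHS]big_enum_val; apply: eq_bigr => j _; rewrite !mxE [l == _]eq_sym.
rewrite -[X in _ = X](mul1mx (1%:M : 'M[R]_N)); apply/matrixP => k l.
rewrite mxE !sel_sum [RHS]mxE [RHS](bigID (mem S)) /=; congr (_ + _).
by apply: eq_bigl => i; rewrite finset.in_setC.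
Qed.

Lemma blk_add_scalar_diag (S : {set 'I_N}) (M : 'M[R]_N) a :
  blk S S (M + a%:M) = blk S S M + a%:M.
Proof. by apply/matrixP => i j; rewrite !mxE (inj_eq enum_val_inj). Qed.

Lemma blk_add_scalar_offdiag (S : {set 'I_N}) (M : 'M[R]_N) a :
  blk S (~: S) (M + a%:M) = blk S (~: S) M.
Proof.
apply/matrixP => i j; rewrite !mxE; case: eqP => [eij|]; last by rewrite addr0.
by have := enum_valP j; rewrite finset.in_setC -eij enum_valP.
Qed.

Lemma lambda_min_blk_ge0 (S : {set 'I_N}) (C : 'M[R]_N) :
  C^T = C -> (forall x : 'cV[R]_N, x != 0 -> 0 < (x^T *m C *m x) 0 0) ->
  0 <= lambda_min (blk S S C).
Proof.
move=> sC posC; apply: lambda_min_ge0 => a; rewrite blk_selmx.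
have blk_lmin := coercive_compress (selmx_isometry S) (lambda_min_coercive sC).
move/(eigenvalue_ge_coercive blk_lmin); exact/le_trans/lambda_min_posdef_ge0.
Qed.

End SelectionMatrix.

Section CompressedInverse.
Variables (R : realType) (n p q : nat) (E : 'M[R]_(n, p)) (F : 'M[R]_(n, q)).
Hypotheses (EF_partition : E *m E^T + F *m F^T = 1%:M)
  (EE : E^T *m E = 1%:M) (FF : F^T *m F = 1%:M) (FE : F^T *m E = 0).

(* With A = E^T M E, B = E^T M F, B' = F^T M E and D = F^T M F this is the
   Schur complement formula E^T M^-1 E = (A - B D^-1 B')^-1, rearranged so
   that the Schur complement itself need not be inverted. *)
Lemma invmx_compress_sub (M : 'M[R]_n) :
  M \in unitmx -> E^T *m M *m E \in unitmx -> F^T *m M *m F \in unitmx ->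
  invmx (E^T *m M *m E) - E^T *m invmx M *m E =
  - (invmx (E^T *m M *m E) *m (E^T *m M *m F) *m invmx (F^T *m M *m F)
       *m (F^T *m M *m E) *m (E^T *m invmx M *m E)).
Proof.
move=> M_unit A_unit D_unit.
set A := E^T *m M *m E; set B := E^T *m M *m F; set B' := F^T *m M *m E.
set D := F^T *m M *m F; set P := E^T *m invmx M *m E; set Q := F^T *m invmx M *m E.
have split_inv k (G : 'M[R]_(n, k)) :
    G^T *m M *m (E *m E^T + F *m F^T) *m invmx M *m E = G^T *m E.
  by rewrite EF_partition mulmx1 -(mulmxA _ M) mulmxV // mulmx1.
have AB : A *m P + B *m Q = 1%:M.
  by move: (split_inv _ E); rewrite EE mulmxDr !mulmxDl !mulmxA.
have BD : B' *m P + D *m Q = 0.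
  by move: (split_inv _ F); rewrite FE mulmxDr !mulmxDl !mulmxA.
have eQ : Q = - (invmx D *m B' *m P).
  rewrite -mulmxA -mulmxN; apply: (canRL (mulKmx D_unit)); apply/eqP.
  by rewrite -addr_eq0 addrC BD.
have -> : invmx A - P = invmx A *m (B *m Q).
  rewrite -[B *m Q](addrK (A *m P)) [_ + A *m P]addrC AB mulmxBr mulmx1.
  by rewrite mulmxA mulVmx // mul1mx.
by rewrite eQ !mulmxN !mulmxA.
Qed.

Lemma opnorm_invmx_compress_sub (M : 'M[R]_n) k :
  M^T = M -> 0 < k -> coercive M k ->
  opnorm (invmx (E^T *m M *m E) - E^T *m invmx M *m E)
    <= opnorm (E^T *m M *m F) ^+ 2 / k ^+ 3.
Proof.
move=> sM k_gt0 Mk; have [Ek Fk] := (coercive_compress EE Mk, coercive_compress FF Mk).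
rewrite invmx_compress_sub ?(coercive_unitmx k_gt0) // opnormN.
have -> : F^T *m M *m E = (E^T *m M *m F)^T by rewrite !trmx_mul trmxK sM mulmxA.
set b := opnorm (E^T *m M *m F).
have E_le1 : opnorm E <= 1 := opnorm_isometry EE.
have ET_le1 : opnorm E^T <= 1 := le_trans (opnorm_trmx E) E_le1.
have Ai := opnorm_invmx_coercive k_gt0 Ek; have Di := opnorm_invmx_coercive k_gt0 Fk.
have P_le : opnorm (E^T *m invmx M *m E) <= 1 * k^-1 * 1.
  exact: opnorm_mulmx_le (opnorm_mulmx_le ET_le1 (opnorm_invmx_coercive k_gt0 Mk)) E_le1.
rewrite [leRHS](_ : _ = k^-1 * b * k^-1 * b * (1 * k^-1 * 1)); last first.
  by field; rewrite gt_eqF.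
apply: opnorm_mulmx_le P_le.
apply: opnorm_mulmx_le (opnorm_trmx _).
apply: opnorm_mulmx_le Di.
exact: opnorm_mulmx_le Ai (lexx b).
Qed.

End CompressedInverse.

Theorem lemma1 (R : realType) (N : nat) (C : 'M[R]_N) (S : {set 'I_N}) :
  C^T = C ->
  (forall x : 'cV[R]_N, x != 0 -> 0 < (x^T *m C *m x) 0 0) ->
  S != finset.set0 -> ~: S != finset.set0 ->
  let theta := opnorm (blk S (~: S) C) ^+ 2 /
               (lambda_min (blk S S C) * lambda_min (blk (~: S) (~: S) C)) in
  theta < 1 ->
  forall lam : R, 0 < lam ->
  opnorm (invmx (blk S S C + lam%:M) - blk S S (invmx (C + lam%:M)))
    <= opnorm (blk S (~: S) C) ^+ 2 / ((1 - theta) * (lambda_min C + lam) ^+ 3).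
Proof.
move=> sC posC _ _ theta theta_lt1 lam lam_gt0.
set k := lambda_min C + lam.
have k_gt0 : 0 < k by have := lambda_min_posdef_ge0 posC; rewrite /k; lra.
have sM : (C + lam%:M)^T = C + lam%:M by rewrite linearD /= sC tr_scalar_mx.
rewrite -blk_add_scalar_diag -(blk_add_scalar_offdiag _ _ lam) !blk_selmx.
apply: le_trans (opnorm_invmx_compress_sub (selmx_partition R S) (selmx_isometry R S)
  (selmx_isometry R (~: S)) (selmxC_orth R S) sM k_gt0
  (coercive_add_scalar lam (lambda_min_coercive sC))) _.
have theta_ge0 : 0 <= theta by rewrite divr_ge0 ?sqr_ge0 ?mulr_ge0 ?lambda_min_blk_ge0.
have k3_gt0 : 0 < k ^+ 3 by rewrite exprn_gt0.
rewrite ler_pdivlMr ?mulr_gt0 ?subr_gt0 // mulrCA divfK ?gt_eqF //.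
by rewrite ler_piMl ?sqr_ge0 //; lra.
Qed.
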